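(* Let $\mathcal{X}$ and $\mathcal{Y}$ be discrete (finite or countable) alphabets. Let $\{p_\theta\}_{\theta\in\Theta}$ be a nonempty family of probability distributions on $\mathcal{X}$ (the uncertain distributions of $X$) and let $\{\boldsymbol{P}_\lambda\}_{\lambda\in\Lambda}$ be a nonempty family of transition probability matrices $\boldsymbol{P}_\lambda=(p_\lambda(y|x))_{x\in\mathcal X,y\in\mathcal Y}$ (the uncertain transition probability matrices of $Y$ given $X$). Then $$\hat H(X,Y)\le \hat H(X)+\hat H(Y|X).$$ Moreover, equality holds when $\Theta$ and $\Lambda$ are singletons (i.e. the distribution of $X$ and the transition matrix of $Y$ given $X$are deterministic), and if $\hat H(Y|X)=0$ then $\hat H(X,Y)=\hat H(X)$.
   Context: Convention: $0\log\frac10=0$; all quantities take values in $[0,\infty]$. The nonlinear quantities are defined by $\hat H(X)=\sup_{\theta\in\Theta}\sum_x p_\theta(x)\log\frac{1}{p_\theta(x)}$; $\hat H(X,Y)=\sup_{\theta\in\Theta}\sup_{\lambda\in\Lambda}\sum_{x,y}p_\theta(x)p_\lambda(y|x)\log\frac{1}{p_\theta(x)p_\lambda(y|x)}$; $\hat H(Y|X=x)=\sup_{\lambda\in\Lambda}\sum_y p_\lambda(y|x)\log\frac{1}{p_\lambda(y|x)}$; $\hat H(Y|X)=\sup_{\theta\in\Theta}\sum_x p_\theta(x)\hat H(Y|X=x)$. *)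

From mathcomp Require Import all_boot all_order all_algebra.
From mathcomp Require Import all_classical all_reals.
From mathcomp Require Import ereal esum exp.
Set Implicit Arguments. Unset Strict Implicit. Unset Printing Implicit Defensive.
Import Order.TTheory GRing.Theory Num.Theory.
Local Open Scope classical_set_scope.
Local Open Scope ring_scope.
Local Open Scope ereal_scope.

(* entropy summand  q log(1/q), with the convention 0 log(1/0) = 0 (natural log) *)
Definition entr (R : realType) (q : R) : R :=
  if q == 0%R then 0%R else (q * ln (q^-1))%R.

Definition is_distr (R : realType) (X : countType) (p : X -> R) : Prop :=
  (forall x, (0 <= p x)%R) /\ \esum_(x in setT) (p x)%:E = 1.

Definition is_trans (R : realType) (X Y : countType) (P : X -> Y -> R) : Prop :=
  forall x, is_distr (P x).

Definition HX (R : realType) (Theta : Type) (X : countType)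
  (p : Theta -> X -> R) : \bar R :=
  ereal_sup [set \esum_(x in setT) (entr (p t x))%:E | t in [set: Theta]].

Definition HXY (R : realType) (Theta Lambda : Type) (X Y : countType)
  (p : Theta -> X -> R) (P : Lambda -> X -> Y -> R) : \bar R :=
  ereal_sup [set ereal_sup
    [set \esum_(xy in setT) (entr (p t xy.1 * P l xy.1 xy.2)%R)%:E
      | l in [set: Lambda]] | t in [set: Theta]].

Definition HYgivenx (R : realType) (Lambda : Type) (X Y : countType)
  (P : Lambda -> X -> Y -> R) (x : X) : \bar R :=
  ereal_sup [set \esum_(y in setT) (entr (P l x y))%:E | l in [set: Lambda]].

Definition HYgivenX (R : realType) (Theta Lambda : Type) (X Y : countType)
  (p : Theta -> X -> R) (P : Lambda -> X -> Y -> R) : \bar R :=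
  ereal_sup [set \esum_(x in setT) ((p t x)%:E * HYgivenx P x)
    | t in [set: Theta]].

From mathcomp Require Import all_boot all_order all_algebra.
From mathcomp Require Import all_classical all_reals.
From mathcomp Require Import ereal esum exp.
From mathcomp Require Import ring.
Import Order.TTheory GRing.Theory Num.Theory.
Local Open Scope classical_set_scope.
Local Open Scope ring_scope.
Local Open Scope ereal_scope.

(* Since [entr (a * b) = b * entr a + a * entr b], for every fixed [theta] and
   [lambda] the joint entropy of [p_theta(x) p_lambda(y|x)] splits as the
   entropy of [p_theta] plus the [p_theta]-average of the conditional
   entropies [H_lambda(Y | X = x)] (all terms are nonnegative, so the
   extended sums can be split and iterated freely).  Bounding each conditional
   entropy by its supremum over [lambda], and then the average by its supremum
   over [theta], gives the inequality; when [Theta] and [Lambda] are singletons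
   no supremum loses anything.  The same chain rule gives [H(X) <= H(X,Y)],
   whence the last claim. *)

Lemma esumZl (R : realType) (T : choiceType) (I : set T) (a : T -> \bar R) (c : R) :
  (0 <= c)%R -> (forall i, I i -> 0 <= a i) ->
  \esum_(i in I) (c%:E * a i) = c%:E * \esum_(i in I) a i.
Proof.
move=> c0 a0; rewrite /esum -ereal_supZl//; last first.
  by apply/set0P; exists (\sum_(x \in set0) a x); exists set0 => //; exact: fsets_set0.
rewrite image_comp; congr ereal_sup; apply: eq_imagel => A [finA AI] /=.
rewrite !fsbig_finite//= !big_seq ge0_sume_distrr// => i.
by rewrite in_fset_set// inE => /AI/a0.
Qed.

Lemma ereal_sup_image_unique {R : realType} {T : Type} (f : T -> \bar R) {t0 : T} :
  (forall t, t = t0) -> ereal_sup [set f t | t in [set: T]] = f t0.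
Proof.
move=> t0_unique; have -> : [set: T] = [set t0].
  by apply/seteqP; split => // t _; exact: t0_unique.
by rewrite image_set1 ereal_sup1.
Qed.

Lemma entrM (R : realType) (a b : R) : (0 <= a)%R -> (0 <= b)%R ->
  entr (a * b) = (b * entr a + a * entr b)%R.
Proof.
rewrite /entr => a0 b0.
have [->|a_neq0] := eqVneq a 0%R; first by rewrite !mul0r eqxx !mulr0 addr0.
have [->|b_neq0] := eqVneq b 0%R; first by rewrite !mulr0 eqxx !mul0r addr0.
rewrite mulf_eq0 (negPf a_neq0) (negPf b_neq0) invfM.
rewrite lnM ?posrE ?invr_gt0 ?lt0r ?a_neq0 ?b_neq0//.
ring.
Qed.

Lemma entr_ge0 (R : realType) (q : R) : (0 <= q)%R -> (q <= 1)%R -> (0 <= entr q)%R.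
Proof.
rewrite /entr => q0 q1; case: eqP => // /eqP q_neq0.
have q_gt0 : (0 < q)%R by rewrite lt0r q_neq0.
by rewrite mulr_ge0// ln_ge0// invf_ge1.
Qed.

Section distribution.
Context {R : realType} {X : countType} {p : X -> R} (hp : is_distr p).

Lemma is_distr_ge0 x : (0 <= p x)%R.
Proof. by case: hp. Qed.

Lemma is_distr_le1 x : (p x <= 1)%R.
Proof.
case: hp => p0 p1; rewrite -lee_fin -p1; apply: esum_ge; exists [set x].
  by split => //; exact: finite_set1.
by rewrite fsbig_set1.
Qed.

Lemma is_distr_entr_ge0 x : (0 <= entr (p x))%R.
Proof. exact: entr_ge0 (is_distr_ge0 x) (is_distr_le1 x). Qed.

Lemma is_distr_esum_entr_ge0 : 0 <= \esum_(x in [set: X]) (entr (p x))%:E.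
Proof. by apply: esum_ge0 => x _; rewrite lee_fin is_distr_entr_ge0. Qed.

End distribution.

Lemma esum_entr_chain (R : realType) (X Y : countType) (q : X -> R) (Q : X -> Y -> R) :
  is_distr q -> is_trans Q ->
  \esum_(xy in [set: X * Y]) (entr (q xy.1 * Q xy.1 xy.2))%:E =
  \esum_(x in [set: X]) (entr (q x))%:E +
  \esum_(x in [set: X]) ((q x)%:E * \esum_(y in [set: Y]) (entr (Q x y))%:E).
Proof.
move=> hq hQ.
have q0 := is_distr_ge0 hq; have Q0 x := is_distr_ge0 (hQ x).
have entr_q0 := is_distr_entr_ge0 hq; have entr_Q0 x := is_distr_entr_ge0 (hQ x).
rewrite -setXTT.
rewrite -(esum_esum (J := fun=> [set: Y]) (a := fun x y => (entr (q x * Q x y))%:E)) /=;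
  last first.
  by move=> x y _ _; rewrite lee_fin entr_ge0 ?mulr_ge0 ?mulr_ile1 ?is_distr_le1.
rewrite -esumD => [|x _|x _]; rewrite ?mule_ge0 ?lee_fin ?is_distr_esum_entr_ge0//.
apply: eq_esum => x _.
under eq_esum do rewrite entrM// EFinD !EFinM muleC.
rewrite esumD => [|y _|y _]; rewrite ?mule_ge0 ?lee_fin//.
rewrite !esumZl// => [|y _|y _]; rewrite ?lee_fin//.
by case: (hQ x) => _ ->; rewrite mule1.
Qed.

Section uncertain_entropy.
Context {R : realType} {X Y : countType} {Theta Lambda : Type}.
Context {p : Theta -> X -> R} {P : Lambda -> X -> Y -> R}.
Context (hp : forall t, is_distr (p t)) (hP : forall l, is_trans (P l)).

Lemma esum_entr_le_HXY t l :
  \esum_(xy in [set: X * Y]) (entr (p t xy.1 * P l xy.1 xy.2))%:E <= HXY p P.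
Proof.
apply: le_trans (ereal_sup_ubound _); last by exists t.
by apply: ereal_sup_ubound; exists l.
Qed.

Lemma HXY_le_HX_HYgivenX : HXY p P <= HX p + HYgivenX p P.
Proof.
apply: ge_ereal_sup => _ [t _ <-]; apply: ge_ereal_sup => _ [l _ <-].
rewrite esum_entr_chain//; apply: leeD; first by apply: ereal_sup_ubound; exists t.
apply: le_trans (_ : \esum_(x in [set: X]) ((p t x)%:E * HYgivenx P x) <= _).
  apply: le_esum => x _; rewrite lee_wpmul2l ?lee_fin ?(is_distr_ge0 (hp t))//.
  by apply: ereal_sup_ubound; exists l.
by apply: ereal_sup_ubound; exists t.
Qed.

Lemma HX_le_HXY (hLambda : inhabited Lambda) : HX p <= HXY p P.
Proof.
apply: ge_ereal_sup => _ [t _ <-]; case: hLambda => l.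
apply: le_trans (esum_entr_le_HXY t l); rewrite esum_entr_chain//; apply: leeDl.
apply: esum_ge0 => x _.
by rewrite mule_ge0 ?lee_fin ?(is_distr_ge0 (hp t)) ?(is_distr_esum_entr_ge0 (hP l x)).
Qed.

Lemma HXY_unique_params (t0 : Theta) (l0 : Lambda) :
  (forall t, t = t0) -> (forall l, l = l0) -> HXY p P = HX p + HYgivenX p P.
Proof.
move=> t0_unique l0_unique.
rewrite /HXY /HX /HYgivenX !(ereal_sup_image_unique _ t0_unique).
rewrite (ereal_sup_image_unique _ l0_unique) esum_entr_chain//; congr (_ + _).
by apply: eq_esum => x _; rewrite /HYgivenx (ereal_sup_image_unique _ l0_unique).
Qed.

End uncertain_entropy.

Theorem theorem4 (R : realType) (X Y : countType) (Theta Lambda : Type)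
  (p : Theta -> X -> R) (P : Lambda -> X -> Y -> R)
  (hTheta : inhabited Theta) (hLambda : inhabited Lambda)
  (hp : forall t, is_distr (p t)) (hP : forall l, is_trans (P l)) :
  [/\ HXY p P <= HX p + HYgivenX p P,
      ((exists t0 : Theta, forall t, t = t0) ->
       (exists l0 : Lambda, forall l, l = l0) ->
       HXY p P = HX p + HYgivenX p P)
    & (HYgivenX p P = 0 -> HXY p P = HX p)].
Proof.
have HXY_le := HXY_le_HX_HYgivenX hp hP.
split => // [[t0 t0_unique] [l0 l0_unique]|HYgivenX0].
  exact: HXY_unique_params.
apply/le_anti; rewrite HX_le_HXY// andbT.
by rewrite HYgivenX0 adde0 in HXY_le.
Qed.
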